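(* Let $f:(0,\infty)\to[1,\infty)$ be nondecreasing and ${\bf C}_0:(0,\infty)\to(0,\infty)$ be monotonically increasing. For an integer $p\ge2$ and $\xi>0$ define $$ {\bf C}(p,\xi)=\frac{{\bf C}_0(\xi)}{2\left[1-(1-p^{-f(\xi)})^{e^{\xi}}\right](1-p^{-f(\xi)})^{e^{\xi}}},\qquad {\bf C}(p)=\min_{\xi>0}{\bf C}(p,\xi), $$ and assume that for all sufficiently large $p$ there is $\xi_0=\xi_0(p)>0$ solving $\xi_0=\log\left[-\frac{\log 2}{\log(1-p^{-f(\xi_0)})}\right]$. Then: (1) if $\lim_{\xi\to\infty}\frac{f(\xi)\log{\bf C}_0(\xi)}{\xi}=0$, then ${\bf C}(p)$ is subexponential or polynomial in $\log p$, i.e. $\lim_{p\to\infty}\frac{\log{\bf C}(p)}{\log p}=0$; (2) in particular, if ${\bf C}_0(\xi)$ is polynomially bounded in $\xi$ and $f(\xi)$ scales sublinearly (i.e. $f(\xi)\le K\xi^{\beta}$ for some constants $K>0$ and $0\le\beta<1$), then ${\bf C}(p)$ is bounded by a polynomial in $\log p$.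
   Context: All logarithms are natural. ''${\bf C}_0$ polynomially bounded'' means ${\bf C}_0(\xi)\le K'\xi^{a}$ for some constants $K',a>0$ and all large $\xi$. *)

From HB Require Import structures.
From mathcomp Require Import all_boot all_order all_algebra.
From mathcomp Require Import all_classical all_reals all_analysis.
Set Implicit Arguments. Unset Strict Implicit. Unset Printing Implicit Defensive.
Import Order.TTheory GRing.Theory Num.Theory.
Import numFieldNormedType.Exports.
Local Open Scope ring_scope.

Definition qpf {R : realType} (f : R -> R) (p : nat) (xi : R) : R :=
  (p%:R) `^ (- f xi).

Definition Cpxi {R : realType} (C0 f : R -> R) (p : nat) (xi : R) : R :=
  C0 xi / (2 * ((1 - (1 - qpf f p xi) `^ expR xi) * (1 - qpf f p xi) `^ expR xi)).

Definition is_Cmin {R : realType} (C0 f : R -> R) (p : nat) (m : R) : Prop :=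
  (exists2 xi, 0 < xi & m = Cpxi C0 f p xi) /\
  (forall xi, 0 < xi -> m <= Cpxi C0 f p xi).

(* Write q = p^(-f xi) <= 1/p and t = (1 - q)^(e^xi). Since t (1 - t) <= 1/4,
   C(p,xi) >= 2 C0(xi) for every xi, with equality at the fixed point xi0(p),
   where t = 1/2. Moreover ln 2 * p / 2 <= e^xi0 <= p^(f xi0), so xi0 -> oo and
   xi0 <= f(xi0) ln p. Hence ln C(p) <= ln 2 + ln C0(xi0), and
   ln C0(xi0) <= (f(xi0) ln C0(xi0) / xi0) ln p = o(ln p); under the growth
   assumptions of (2), xi0^(1 - beta) <= K ln p turns C0(xi0) <= K' xi0^a into a
   polylogarithmic bound. From below, C(p) >= 2 inf C0 > 0. *)

From HB Require Import structures.
From mathcomp Require Import all_boot all_order all_algebra.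
From mathcomp Require Import all_classical all_reals all_analysis.
From mathcomp Require Import ring lra.
Import Order.TTheory GRing.Theory Num.Theory.
Import numFieldNormedType.Exports.
Local Open Scope classical_set_scope.
Local Open Scope ring_scope.

Section Elementary.
Context {R : realType}.
Implicit Types (q x xi : R).

Lemma ln2_le1 : ln (2 : R) <= 1.
Proof. by rewrite -ler_expR lnK ?posrE // (le_trans _ (expR_ge1Dx 1)). Qed.

Lemma ln2_gt0 : 0 < ln (2 : R).
Proof. by rewrite ln_gt0 ?ltr1n. Qed.

Lemma le_half_lt1 q : q <= 2^-1 -> q < 1.
Proof. by move/le_lt_trans; apply; rewrite invf_lt1 ?ltr1n. Qed.

Lemma ln1B_bounds q : 0 < q <= 2^-1 -> -(2 * q) <= ln (1 - q) <= - q.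
Proof.
case/andP=> q_gt0 q_le; have q_lt1 := le_half_lt1 _ q_le.
have q1_gt0 : 0 < 1 - q by rewrite subr_gt0.
rewrite le_ln1Dx ?ltrN2 // andbT.
have -> : 1 - q = (1 + q / (1 - q))^-1.
  by rewrite -[1 - q]invrK; congr _^-1; field; rewrite lt0r_neq0.
rewrite lnV ?posrE ?addr_gt0 ?divr_gt0 // lerN2.
rewrite (le_trans (le_ln1Dx _)) //.
  by rewrite (lt_le_trans (ltrN10 _)) // divr_ge0 // ltW.
by rewrite ler_pdivrMr //; nra.
Qed.

Lemma powR1B_bounds q x : 0 < q <= 2^-1 -> 1 <= x ->
  expR (- (2 * q * x)) <= (1 - q) `^ x <= 1 - q.
Proof.
move=> hq x_ge1; have /andP[lnq_ge _] := ln1B_bounds _ hq.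
case/andP: hq => q_gt0 q_le; have q_lt1 := le_half_lt1 _ q_le.
have q1_in01 : 0 < 1 - q <= 1 by rewrite subr_gt0 q_lt1 gerBl ltW.
rewrite ge1r_powR // andbT.
rewrite -[_ `^ _]lnK ?posrE ?powR_gt0 ?subr_gt0 // ln_powR ler_expR.
by rewrite -mulNr mulrC ler_wpM2l // (le_trans ler01).
Qed.

Lemma mul2_le_div_mul1B (t c : R) : 0 < t < 1 -> 0 <= c -> 2 * c <= c / (2 * ((1 - t) * t)).
Proof.
case/andP=> t_gt0 t_lt1 c_ge0.
have d_gt0 : 0 < 2 * ((1 - t) * t) by rewrite !mulr_gt0 ?subr_gt0.
rewrite ler_pdivlMr //; have := sqr_ge0 (2 * t - 1); rewrite expr2; nra.
Qed.

Lemma expR_fixpoint q xi : 0 < q <= 2^-1 ->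
  xi = ln (- ln 2 / ln (1 - q)) -> expR xi * ln (1 - q) = - ln 2.
Proof.
move=> hq ->; have /andP[_ lnq_le] := ln1B_bounds _ hq.
have lnq_lt0 : ln (1 - q) < 0 by rewrite (le_lt_trans lnq_le) // oppr_lt0; case/andP: hq.
rewrite lnK ?divfK ?lt_eqF //.
by rewrite posrE nmulr_rgt0 ?invr_lt0 // oppr_lt0 ln2_gt0.
Qed.

Lemma expR_fixpoint_bounds q xi : 0 < q <= 2^-1 ->
  xi = ln (- ln 2 / ln (1 - q)) -> ln 2 / (2 * q) <= expR xi <= q^-1.
Proof.
move=> hq hxi; have /andP[lnq_ge lnq_le] := ln1B_bounds _ hq.
have E := expR_fixpoint _ _ hq hxi; have e_gt0 := expR_gt0 xi.
have l2_le1 : ln (2 : R) <= 1 := ln2_le1; case/andP: hq => q_gt0 _.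
rewrite ler_pdivrMr ?mulr_gt0 // -[q^-1]div1r ler_pdivlMr //.
apply/andP; split; nra.
Qed.
Lemma ratio_cvg0 (u v : nat -> R) :
  (forall e, 0 < e -> \forall n \near \oo, 0 < v n /\ `|u n| <= e * v n) ->
  u n / v n @[n --> \oo] --> 0.
Proof.
move=> uv; apply/cvgrPdist_le => e e_gt0; near=> n.
have [v_gt0 u_le] : 0 < v n /\ `|u n| <= e * v n by near: n; exact: uv.
by rewrite sub0r normrN normrM normfV (gtr0_norm v_gt0) ler_pdivrMr.
Unshelve. all: by end_near.
Qed.

Lemma ln_natr_ge_near (B : R) : \forall p \near \oo, B <= ln p%:R.
Proof.
apply: filterS (nbhs_infty_ger (expR B)) => p p_ge.
by rewrite -ler_expR lnK // posrE (lt_le_trans (expR_gt0 B)).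
Qed.

Lemma powR_le_of_sublinear_bound {x K L a be : R} {d : nat} :
  1 <= x -> 0 < K -> 1 <= L -> 0 <= a -> 0 <= be < 1 -> a / (1 - be) <= d%:R ->
  x <= K * x `^ be * L -> x `^ a <= K `^ (a / (1 - be)) * L ^+ d.
Proof.
move=> x_ge1 K_gt0 L_ge1 a_ge0 /andP[be_ge0 be_lt1] r_le x_le.
have x_gt0 : 0 < x by rewrite (lt_le_trans ltr01).
have be1_gt0 : 0 < 1 - be by rewrite subr_gt0.
have x1be_le : x `^ (1 - be) <= K * L.
  rewrite -(ler_pM2r (powR_gt0 be x_gt0)) -powRD ?subrK ?powRr1 ?(ltW x_gt0) //.
    by rewrite mulrAC.
  by rewrite gt_eqF ?implybT.
set r := a / (1 - be).
have r_ge0 : 0 <= r by rewrite divr_ge0 // ltW.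
rewrite -[a](divfK (lt0r_neq0 be1_gt0)) -/r mulrC powRrM.
have L_ge0 : 0 <= L := le_trans ler01 L_ge1.
rewrite (le_trans (ge0_ler_powR r_ge0 _ _ x1be_le)) ?nnegrE ?powR_ge0 ?mulr_ge0 ?(ltW K_gt0) //.
rewrite powRM ?(ltW K_gt0) // ler_pM2l ?powR_gt0 // -powR_mulrn //.
exact: ler_powR.
Qed.
End Elementary.

Definition tpf {R : realType} (f : R -> R) (p : nat) (xi : R) : R :=
  (1 - qpf f p xi) `^ expR xi.

Section FixedPrime.
Context {R : realType}.
Context {f C0 : R -> R} {p : nat}.
Hypothesis p_ge2 : (2 <= p)%N.
Implicit Types (x y xi : R).

Let p_gt0 : (0 < p)%N. Proof. exact: leq_trans p_ge2. Qed.
Let p_ge1 : 1 <= p%:R :> R. Proof. by rewrite ler1n. Qed.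

Lemma qpf_le_invn xi : 1 <= f xi -> qpf f p xi <= p%:R^-1.
Proof.
by move=> f_ge1; rewrite /qpf -powR_inv1 // ler_powR // lerN2.
Qed.

Lemma qpf_bounds xi : 1 <= f xi -> 0 < qpf f p xi <= 2^-1.
Proof.
move=> f_ge1; rewrite powR_gt0 ?ltr0n // (le_trans (qpf_le_invn _ f_ge1)) //.
by rewrite lef_pV2 ?posrE ?ltr0n // ler_nat.
Qed.

Lemma qpf_le x y : f x <= f y -> qpf f p y <= qpf f p x.
Proof. by move=> fxy; rewrite ler_powR // lerN2. Qed.

Lemma tpf_bounds xi : 1 <= f xi -> 0 <= xi ->
  expR (- (2 * qpf f p xi * expR xi)) <= tpf f p xi <= 1 - qpf f p xi.
Proof.
by move=> f_ge1 xi_ge0; apply: powR1B_bounds; rewrite ?qpf_bounds // -expR0 ler_expR.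
Qed.

Lemma Cpxi_ge xi : 1 <= f xi -> 0 <= xi -> 0 <= C0 xi -> 2 * C0 xi <= Cpxi C0 f p xi.
Proof.
move=> f_ge1 xi_ge0 C0_ge0; apply: mul2_le_div_mul1B => //.
have /andP[q_gt0 _] := qpf_bounds _ f_ge1.
have /andP[t_ge t_le] := tpf_bounds _ f_ge1 xi_ge0.
by rewrite (lt_le_trans (expR_gt0 _) t_ge) (le_lt_trans t_le) // gtrBl.
Qed.

Lemma Cpxi_fixpoint xi : 1 <= f xi ->
  xi = ln (- ln 2 / ln (1 - qpf f p xi)) -> Cpxi C0 f p xi = 2 * C0 xi.
Proof.
move=> f_ge1 hxi; have hq := qpf_bounds _ f_ge1.
have q1_gt0 : 0 < 1 - qpf f p xi by case/andP: hq => _ /le_half_lt1; rewrite subr_gt0.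
have t_half : tpf f p xi = 2^-1.
  rewrite /tpf -[1 - _]lnK // -expRM mulrC expR_fixpoint //.
  by rewrite expRN lnK ?posrE.
by rewrite /Cpxi -/(tpf f p xi) t_half; field.
Qed.

Lemma fixpoint_le_mul_lnp xi : 1 <= f xi ->
  xi = ln (- ln 2 / ln (1 - qpf f p xi)) -> xi <= f xi * ln p%:R.
Proof.
move=> f_ge1 hxi; have /andP[_ e_le] := expR_fixpoint_bounds _ _ (qpf_bounds _ f_ge1) hxi.
by rewrite -ler_expR mulrC expRM lnK ?posrE ?ltr0n // (le_trans e_le) // /qpf -powRN opprK.
Qed.

Lemma fixpoint_expR_ge xi : 1 <= f xi ->
  xi = ln (- ln 2 / ln (1 - qpf f p xi)) -> ln 2 / 2 * p%:R <= expR xi.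
Proof.
move=> f_ge1 hxi; have /andP[+ _] := expR_fixpoint_bounds _ _ (qpf_bounds _ f_ge1) hxi.
apply: le_trans; rewrite invfM mulrA.
apply: ler_wpM2l; first by rewrite divr_ge0 // ltW ?ln2_gt0.
have /andP[q_gt0 _] := qpf_bounds _ f_ge1.
by rewrite -[p%:R]invrK lef_pV2 ?posrE ?invr_gt0 ?ltr0n // qpf_le_invn.
Qed.
End FixedPrime.

Section Asymptotics.
Context {R : realType}.
Context {f C0 : R -> R} {Cmin : nat -> R}.
Hypothesis f_ge1 : forall {xi}, 0 < xi -> 1 <= f xi.
Hypothesis f_mono : forall {x y}, 0 < x -> x <= y -> f x <= f y.
Hypothesis C0_pos : forall {xi}, 0 < xi -> 0 < C0 xi.
Hypothesis C0_mono : forall {x y}, 0 < x -> x <= y -> C0 x <= C0 y.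
Hypothesis Cmin_def : forall {p : nat}, (2 <= p)%N -> is_Cmin C0 f p (Cmin p).
Hypothesis xi0_ex : \forall p \near \oo, exists2 xi0 : R, 0 < xi0 &
  xi0 = ln (- ln 2 / ln (1 - qpf f p xi0)).

(* As C(2,.) attains its minimum at some xs > 0, C0 cannot decay to 0 near 0:
   on (0, xs] the denominator of C(2,xi) stays bounded away from 0. *)
Lemma C0_bounded_below : exists2 c, 0 < c & forall xi, 0 < xi -> c <= C0 xi.
Proof.
have two_ge2 : (2 <= 2)%N by [].
have [[xs xs_gt0 Cmin2E] Cmin2_le] := Cmin_def two_ge2.
set qs := qpf f 2 xs; set b := expR (- expR xs).
have qs_gt0 : 0 < qs by have /andP[] := qpf_bounds two_ge2 _ (f_ge1 xs_gt0).
have b_gt0 : 0 < b := expR_gt0 _.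
have C0xs_gt0 := C0_pos xs_gt0.
have C0_ge_near0 xi : 0 < xi -> xi <= xs -> 4 * (qs * b) * C0 xs <= C0 xi.
  move=> xi_gt0 xi_le; have fxi_ge1 := f_ge1 xi_gt0.
  have /andP[q_gt0 q_le] := qpf_bounds two_ge2 _ fxi_ge1.
  have /andP[t_ge t_le] := tpf_bounds two_ge2 _ fxi_ge1 (ltW xi_gt0).
  have qs_le : qs <= qpf f 2 xi := qpf_le two_ge2 _ _ (f_mono xi_gt0 xi_le).
  have b_le : b <= tpf f 2 xi.
    apply: le_trans t_ge; rewrite ler_expR lerN2 -[expR xs]mul1r.
    apply: ler_pM; rewrite ?mulr_ge0 ?expR_ge0 ?ler_expR //; last by lra.
    exact: ltW (lt_le_trans qs_gt0 qs_le).
  have := le_trans (Cpxi_ge two_ge2 _ (f_ge1 xs_gt0) (ltW xs_gt0) (ltW C0xs_gt0)).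
  rewrite -Cmin2E => /(_ _ (Cmin2_le _ xi_gt0)).
  rewrite /Cpxi -/(tpf f 2 xi) ler_pdivlMr; last first.
    by rewrite !mulr_gt0 ?(lt_le_trans b_gt0 b_le) // subr_gt0 (le_lt_trans t_le) // gtrBl.
  apply: le_trans.
  have d_ge : qs * b <= (1 - tpf f 2 xi) * tpf f 2 xi.
    by apply: ler_pM (ltW qs_gt0) (ltW b_gt0) _ b_le; rewrite (le_trans qs_le) //; lra.
  nra.
exists (Order.min (C0 xs) (4 * (qs * b) * C0 xs)); first by rewrite lt_min C0xs_gt0 !mulr_gt0.
move=> xi xi_gt0; case: (leP xi xs) => [xi_le | /ltW xs_le].
  by rewrite ge_min C0_ge_near0 ?orbT.
by rewrite ge_min C0_mono.
Qed.

Lemma Cmin_bounded_below : exists2 c, 0 < c & forall p, (2 <= p)%N -> c <= Cmin p.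
Proof.
have [c c_gt0 C0_ge] := C0_bounded_below.
exists (2 * c) => [|p p_ge2]; first by rewrite mulr_gt0.
have [[xs xs_gt0 ->] _] := Cmin_def p_ge2.
apply: le_trans (Cpxi_ge p_ge2 _ (f_ge1 xs_gt0) (ltW xs_gt0) (ltW (C0_pos xs_gt0))).
by rewrite ler_pM2l // C0_ge.
Qed.

Lemma Cmin_le_near (P : R -> Prop) : (\forall xi \near +oo, P xi) ->
  \forall p \near \oo, exists xi,
    [/\ 0 < xi, P xi, Cmin p <= 2 * C0 xi & xi <= f xi * ln p%:R].
Proof.
move=> [M [_ PM]]; near=> p.
have p_ge2 : (2 <= p)%N by near: p; exact: nbhs_infty_ge.
have [xi xi_gt0 hxi] : exists2 xi : R, 0 < xi & xi = ln (- ln 2 / ln (1 - qpf f p xi)).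
  by near: p; exact: xi0_ex.
have fxi_ge1 := f_ge1 xi_gt0.
exists xi; split => //.
- apply: PM; rewrite -ltr_expR (lt_le_trans _ (fixpoint_expR_ge p_ge2 _ fxi_ge1 hxi)) //.
  rewrite mulrAC ltr_pdivlMr // mulrC -ltr_pdivrMl ?ln2_gt0 //.
  by near: p; exact: nbhs_infty_gtr.
- have [_ Cmin_le] := Cmin_def p_ge2.
  by rewrite -(Cpxi_fixpoint (C0 := C0) p_ge2 _ fxi_ge1 hxi) Cmin_le.
- exact: fixpoint_le_mul_lnp p_ge2 _ fxi_ge1 hxi.
Unshelve. all: by end_near.
Qed.

Lemma lnCmin_div_lnp_cvg0 :
  f xi * ln (C0 xi) / xi @[xi --> +oo] --> 0 ->
  ln (Cmin p) / ln p%:R @[p --> \oo] --> 0.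
Proof.
move=> flnC0_cvg0; apply: ratio_cvg0 => e e_gt0.
have [c c_gt0 Cmin_ge] := Cmin_bounded_below.
have flnC0_small : \forall xi \near +oo, `|0 - f xi * ln (C0 xi) / xi| <= e / 2.
  by move/cvgrPdist_le : flnC0_cvg0; apply; rewrite divr_gt0.
near=> p.
have p_ge2 : (2 <= p)%N by near: p; exact: nbhs_infty_ge.
have [xi [xi_gt0 flnC0_le Cmin_le xi_le]] : exists xi, [/\ 0 < xi,
    `|0 - f xi * ln (C0 xi) / xi| <= e / 2, Cmin p <= 2 * C0 xi & xi <= f xi * ln p%:R].
  by near: p; exact: Cmin_le_near.
have lnp_ge1 : 2 * ln 2 / e <= ln p%:R by near: p; exact: ln_natr_ge_near.
have lnp_ge2 : - ln c / e <= ln p%:R by near: p; exact: ln_natr_ge_near.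
have lnp_gt0 : 0 < ln (p%:R : R) by apply: ln_gt0; rewrite ltr1n.
have fxi_gt0 : 0 < f xi := lt_le_trans ltr01 (f_ge1 xi_gt0).
have C0xi_gt0 := C0_pos xi_gt0.
have Cmin_gt0 : 0 < Cmin p := lt_le_trans c_gt0 (Cmin_ge _ p_ge2).
have lnC0_le : ln (C0 xi) <= e / 2 * ln p%:R.
  move: flnC0_le; rewrite sub0r normrN => /(le_trans (ler_norm _)).
  rewrite ler_pdivrMr // => flnC0_le.
  have e2_gt0 : 0 < e / 2 by rewrite divr_gt0.
  nra.
have lnCmin_le : ln (Cmin p) <= ln 2 + ln (C0 xi).
  by rewrite -lnM ?posrE // ler_ln ?posrE ?mulr_gt0.
have lnCmin_ge : ln c <= ln (Cmin p) by rewrite ler_ln ?posrE ?Cmin_ge.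
rewrite ler_pdivrMr // [_ * e]mulrC in lnp_ge1.
rewrite ler_pdivrMr // mulrC in lnp_ge2.
split => //; rewrite ler_norml; apply/andP; split; nra.
Unshelve. all: by end_near.
Qed.

Lemma Cmin_le_polylog :
  (exists K' a : R, 0 < K' /\ 0 < a /\ \forall xi \near +oo, C0 xi <= K' * xi `^ a) ->
  (exists K beta : R, 0 < K /\ 0 <= beta < 1 /\
     \forall xi \near +oo, f xi <= K * xi `^ beta) ->
  exists (c : R) (d : nat), \forall p \near \oo, Cmin p <= c * (ln p%:R) ^+ d.
Proof.
move=> [K' [a [K'_gt0 [a_gt0 C0_le]]]] [K [be [K_gt0 [be01 f_le]]]].
set r := a / (1 - be).
exists (2 * (K' * K `^ r)), (Num.truncn r).+1.
have growth : \forall xi \near +oo, [/\ C0 xi <= K' * xi `^ a, f xi <= K * xi `^ be & 1 <= xi].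
  by near=> xi; split; near: xi => //; exact: nbhs_pinfty_ge.
near=> p.
have [xi [_ [C0xi_le fxi_le xi_ge1] Cmin_le xi_le]] : exists xi, [/\ 0 < xi,
    [/\ C0 xi <= K' * xi `^ a, f xi <= K * xi `^ be & 1 <= xi],
    Cmin p <= 2 * C0 xi & xi <= f xi * ln p%:R].
  by near: p; exact: Cmin_le_near.
have lnp_ge1 : 1 <= ln (p%:R : R) by near: p; exact: ln_natr_ge_near.
have xi_le' : xi <= K * xi `^ be * ln p%:R.
  exact: le_trans xi_le (ler_wpM2r (le_trans ler01 lnp_ge1) fxi_le).
have xia_le := powR_le_of_sublinear_bound xi_ge1 K_gt0 lnp_ge1 (ltW a_gt0) be01
  (ltW (truncnS_gt r)) xi_le'.
apply: (le_trans Cmin_le).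
rewrite -!mulrA ler_pM2l // (le_trans C0xi_le) // ler_pM2l.
Unshelve. all: by end_near.
Qed.
End Asymptotics.

Theorem lemma2 (R : realType) (f C0 : R -> R) (Cmin : nat -> R)
  (f_ge1 : forall xi, 0 < xi -> 1 <= f xi)
  (f_mono : forall x y, 0 < x -> x <= y -> f x <= f y)
  (C0_pos : forall xi, 0 < xi -> 0 < C0 xi)
  (C0_mono : forall x y, 0 < x -> x <= y -> C0 x <= C0 y)
  (Cmin_def : forall p : nat, (2 <= p)%N -> is_Cmin C0 f p (Cmin p))
  (xi0_ex : \forall p \near \oo, exists2 xi0 : R, 0 < xi0 &
      xi0 = ln (- ln 2 / ln (1 - qpf f p xi0))) :
  ((f xi * ln (C0 xi) / xi @[xi --> +oo] --> 0) ->
     ln (Cmin p) / ln p%:R @[p --> \oo] --> 0)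
  /\
  ((exists K' a : R, 0 < K' /\ 0 < a /\
       \forall xi \near +oo, C0 xi <= K' * xi `^ a) ->
   (exists K beta : R, 0 < K /\ 0 <= beta < 1 /\
       \forall xi \near +oo, f xi <= K * xi `^ beta) ->
   exists (c : R) (d : nat), \forall p \near \oo, Cmin p <= c * (ln p%:R) ^+ d).
Proof.
split.
- exact: lnCmin_div_lnp_cvg0 f_ge1 f_mono C0_pos C0_mono Cmin_def xi0_ex.
- exact: Cmin_le_polylog f_ge1 Cmin_def xi0_ex.
Qed.
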